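(* Assume (A1)–(A3) and $\alpha>1$, let $\mu>0$ and $LR_{target}>0$. Consider the problem of choosing parameters $\bar c\ge zMIC$ and $T_{bc}\ge0$ such that the profile $C_{bc}$ (equal to $\bar c$ on $[0,T_{bc}]$ and to $\bar c e^{-\mu(t-T_{bc})}$ for $t>T_{bc}$) satisfies $LR_{max}[C_{bc}]=LR_{target}$, with $AUC[C_{bc}]$ minimal. Let $c_{opt}$ be the unique solution in $(0,\infty)$ of $k'(c)=\frac{k(c)-r}{c}$ and $$\rho=\int_{zMIC}^{c_{opt}}\frac{k(u)-r}{u}\,du.$$ (i) If $\rho<\ln(10)\,LR_{target}\,\mu$, the solution is $\bar c=c_{opt}$ and $$T_{bc}=T_{bc,opt}=\frac{\ln(10)\,LR_{target}-\mu^{-1}\rho}{k(c_{opt})-r};$$ the maximal log-reduction $LR_{target}$ is reached at time $T^*=T_{bc,opt}+\frac1\mu\ln\left(\frac{c_{opt}}{zMIC}\right)$, and $$AUC_{bc,opt}=\left[\mu^{-1}+\frac{\ln(10)\,LR_{target}-\mu^{-1}\rho}{k(c_{opt})-r}\right]c_{opt}.$$ (ii) If $\rho\ge\ln(10)\,LR_{target}\,\mu$, the solution is $T_{bc}=0$ and $\bar c=c^*$, where $c^*$ is the solution of $\int_{zMIC}^{c^*}\frac{k(u)-r}{u}du=\ln(10)\,LR_{target}\,\mu$; so $C_{bc}(t)=c^*e^{-\mu t}$, the target is reached at $T^*=\frac1\mu\ln\left(\frac{c^*}{zMIC}\right)$, and $AUC_{bc,opt}=\mu^{-1}c^*$.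
   Context: Let $r>0$ and let $k:[0,\infty)\to[0,\infty)$ satisfy: (A1) $k(0)=0$, $k$ is continuous and strictly increasing on $[0,\infty)$, and twice differentiable on $(0,\infty)$; (A2) $\lim_{c\to\infty}k(c)=k_{max}<\infty$; (A3) either (i) (concave case) $k''(c)<0$ for all $c>0$, or (ii) (sigmoidal case) there is $c_{infl}>0$ with $k''(c)>0$ for $0<c<c_{infl}$ and $k''(c)<0$ for $c>c_{infl}$. Set $\alpha=k_{max}/r$, and let $zMIC$ be the unique $c>0$ with $k(c)=r$. For a non-negative $C\in L^1[0,\infty)$: $AUC[C]=\int_0^\infty C(t)dt$, $LR(T)=\frac{1}{\ln 10}\int_0^T[k(C(t))-r]dt$, $LR_{max}[C]=\max_{T\ge0}LR(T)$. The profile $C_{bc}$ is the one induced, under one-compartment pharmacokinetics $C'=V^{-1}d(t)-\mu C$, $C(0)=0$, by the bolus+continuous dosing schedule $d(t)=V\bar c[\delta(t)+\mu H(T_{bc}-t)]$ ($H$ the Heaviside function, $\mu>0$ the drug decay rate). *)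

From Stdlib Require Import Reals.
From Coquelicot Require Import Coquelicot.
Open Scope R_scope.

Definition Cbc (cbar mu Tbc : R) (t : R) : R :=
  if Rle_dec t Tbc then cbar else cbar * exp (- mu * (t - Tbc)).

Definition AUC (C : R -> R) : R :=
  RInt_gen C (at_point 0) (Rbar_locally p_infty).

Definition LR (k : R -> R) (r : R) (C : R -> R) (T : R) : R :=
  / ln 10 * RInt (fun t => k (C t) - r) 0 T.

Definition is_LRmax (k : R -> R) (r : R) (C : R -> R) (L : R) : Prop :=
  (exists T, 0 <= T /\ LR k r C T = L) /\ (forall T, 0 <= T -> LR k r C T <= L).

Definition feasible (k : R -> R) (r zMIC mu LRt cbar Tbc : R) : Prop :=
  zMIC <= cbar /\ 0 <= Tbc /\ is_LRmax k r (Cbc cbar mu Tbc) LRt.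

Definition is_solution (k : R -> R) (r zMIC mu LRt cbar Tbc : R) : Prop :=
  feasible k r zMIC mu LRt cbar Tbc /\
  forall c T, feasible k r zMIC mu LRt c T ->
    AUC (Cbc cbar mu Tbc) <= AUC (Cbc c mu T) /\
    (AUC (Cbc c mu T) = AUC (Cbc cbar mu Tbc) -> c = cbar /\ T = Tbc).

(* Along the constraint LR_max = LR_target, the infusion time T is determined by the
   concentration c: the log-reduction peaks when the decaying profile crosses zMIC, where
   (k c - r) T + mu^-1 int_zMIC^c (k u - r) / u du = ln 10 LR_target.  Eliminating T turns
   the AUC c T + c / mu into a function of c alone, whose derivative has the sign of
   -(c k'(c) - k c + r).  By (A3) this gap is positive below c_opt and negative above, so
   the AUC decreases up to c_opt and increases afterwards; when the constraint forces
   T = 0 before c_opt is reached, the minimum is at the largest admissible c, namely c*. *)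

From Stdlib Require Import Reals Lra.
From Coquelicot Require Import Coquelicot.
Open Scope R_scope.

Lemma exp_le_compat x y : x <= y -> exp x <= exp y.
Proof. intros [H | ->]; [now left; apply exp_increasing | now right]. Qed.

Lemma continuous_Rmax_l a x : continuous (Rmax a) x.
Proof.
  apply continuous_ext with (f := fun t => (a + t + Rabs (t - a)) / 2).
  { intros t. change (@eq R ((a + t + Rabs (t - a)) / 2) (Rmax a t)).
    unfold Rmax. destruct (Rle_dec a t).
    - rewrite Rabs_right by lra. field.
    - rewrite Rabs_left by lra. field. }
  apply (continuous_mult (fun t => a + t + Rabs (t - a)) (fun _ => / 2)); [| apply continuous_const].
  apply (continuous_plus (fun t => a + t) (fun t => Rabs (t - a))).
  - apply (continuous_plus (fun _ => a) (fun t => t)); [apply continuous_const | apply continuous_id].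
  - apply continuous_Rabs_comp, (continuous_minus (fun t => t) (fun _ => a));
      [apply continuous_id | apply continuous_const].
Qed.

Lemma Cbc_Rmax c mu T t : Cbc c mu T t = c * exp (- mu * Rmax 0 (t - T)).
Proof.
  unfold Cbc. destruct (Rle_dec t T).
  - rewrite Rmax_left, Rmult_0_r, exp_0 by lra. ring.
  - rewrite Rmax_right by lra. reflexivity.
Qed.

Lemma continuous_Cbc c mu T x : continuous (Cbc c mu T) x.
Proof.
  apply continuous_ext with (f := fun t => c * exp (- mu * Rmax 0 (t - T))).
  { intros t. now rewrite Cbc_Rmax. }
  apply (continuous_mult (fun _ => c)); [apply continuous_const |].
  apply continuous_exp_comp, (continuous_mult (fun _ => - mu)); [apply continuous_const |].
  apply (continuous_comp (fun t => t - T) (Rmax 0)); [| apply continuous_Rmax_l].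
  apply (continuous_minus (fun t => t) (fun _ => T)); [apply continuous_id | apply continuous_const].
Qed.

Lemma Cbc_pos c mu T t : 0 < c -> 0 < Cbc c mu T t.
Proof. intros Hc. rewrite Cbc_Rmax. apply Rmult_lt_0_compat; [exact Hc | apply exp_pos]. Qed.

Lemma Cbc_antitone c mu T t s : 0 <= c -> 0 <= mu -> t <= s -> Cbc c mu T s <= Cbc c mu T t.
Proof.
  intros Hc Hmu Hts. rewrite !Cbc_Rmax.
  apply Rmult_le_compat_l, exp_le_compat; [exact Hc |].
  apply Rmult_le_compat_neg_l; [lra |]. apply Rle_max_compat_l. lra.
Qed.

Lemma ln_div_ge0 c z : 0 < z <= c -> 0 <= ln (c / z).
Proof.
  intros Hz. rewrite ln_div by lra.
  assert (ln z <= ln c) by (apply ln_le; lra). lra.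
Qed.

Lemma decay_to_level c mu z : 0 < z -> 0 < c -> 0 < mu ->
  c * exp (- mu * (/ mu * ln (c / z))) = z.
Proof.
  intros Hz Hc Hmu.
  replace (- mu * (/ mu * ln (c / z))) with (- ln (c / z)) by (field; lra).
  rewrite exp_Ropp, exp_ln by (apply Rdiv_lt_0_compat; lra). field. lra.
Qed.

Lemma Cbc_at_cross c mu T z : 0 < z <= c -> 0 < mu ->
  Cbc c mu T (T + / mu * ln (c / z)) = z.
Proof.
  intros Hz Hmu. rewrite Cbc_Rmax, Rmax_right;
    replace (T + / mu * ln (c / z) - T) with (/ mu * ln (c / z)) by ring.
  - apply decay_to_level; lra.
  - apply Rmult_le_pos; [apply Rlt_le, Rinv_0_lt_compat, Hmu | apply ln_div_ge0, Hz].
Qed.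

Lemma AUC_Cbc c mu T : 0 <= T -> 0 < mu -> AUC (Cbc c mu T) = c * T + c / mu.
Proof.
  intros HT Hmu. unfold AUC. apply is_RInt_gen_unique.
  change (c * T + c / mu) with (plus (c * T) (c / mu)).
  apply (@is_RInt_gen_Chasles R_NormedModule (at_point 0) (Rbar_locally p_infty) _ _
           (Cbc c mu T) T (c * T) (c / mu)).
  - apply is_RInt_gen_at_point, is_RInt_ext with (f := fun _ => c).
    { intros x Hx. rewrite Rmin_left, Rmax_right in Hx by lra.
      unfold Cbc. destruct (Rle_dec x T); [reflexivity | lra]. }
    replace (c * T) with (scal (T - 0) c) by (unfold scal; simpl; unfold mult; simpl; ring).
    exact (@is_RInt_const R_NormedModule 0 T c).
  - set (E := fun x => - (c / mu) * exp (- mu * (x - T))).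
    assert (HdE : forall x, is_derive E x (c * exp (- mu * (x - T)))).
    { intros x. unfold E. auto_derive; [easy |]. unfold Rminus. field; lra. }
    apply is_RInt_gen_ext with (f := Derive E).
    { apply (Filter_prod _ _ _ (fun x => x = T) (fun y => T < y)); [reflexivity | now exists T |].
      intros a b -> Hb x Hx. simpl in Hx. rewrite Rmin_left, Rmax_right in Hx by lra.
      rewrite (is_derive_unique _ _ _ (HdE x)).
      unfold Cbc. destruct (Rle_dec x T); [lra | reflexivity]. }
    replace (c / mu) with (0 - E T)
      by (unfold E; rewrite Rminus_diag, Rmult_0_r, exp_0; field; lra).
    apply is_RInt_gen_Derive.
    + apply filter_forall. intros ab x _. eexists; apply HdE.
    + apply filter_forall. intros ab x _.
      apply continuous_ext with (f := fun x => c * exp (- mu * (x - T))).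
      { intros y. symmetry; apply is_derive_unique, HdE. }
      apply (@ex_derive_continuous R_AbsRing R_NormedModule). auto_derive; easy.
    + intros P HP. exact (locally_singleton _ _ HP).
    + unfold E. replace 0 with (- (c / mu) * 0) by ring.
      apply (is_lim_scal_l (fun x => exp (- mu * (x - T))) _ p_infty 0).
      apply is_lim_ext with (f := fun x => exp (- mu * x + mu * T)).
      { intros x. f_equal. ring. }
      apply (is_lim_comp_lin exp (- mu) (mu * T) p_infty 0); [| lra].
      simpl. destruct (Rle_dec 0 (- mu)) as [Hneg | _]; [exfalso; lra |]. apply is_lim_exp_m.
Qed.

Lemma is_LRmax_iff (k : R -> R) r C L Tmax : 0 <= Tmax ->
  (forall t, 0 <= t -> LR k r C t <= LR k r C Tmax) ->
  is_LRmax k r C L <-> LR k r C Tmax = L.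
Proof.
  intros HT Hmax. split.
  - intros [[T0 [HT0 <-]] Hle]. specialize (Hle _ HT). specialize (Hmax _ HT0). lra.
  - intros <-. split; [now exists Tmax | exact Hmax].
Qed.

Lemma ln10_pos : 0 < ln 10.
Proof. rewrite <- ln_1. apply ln_increasing; lra. Qed.

Lemma strict_incr_of_is_derive (f df : R -> R) a b : a < b ->
  (forall x, a <= x <= b -> is_derive f x (df x)) ->
  (forall x, a < x < b -> 0 < df x) -> f a < f b.
Proof.
  intros Hab Hd Hpos.
  destruct (MVT_cor2 f df a b Hab) as [c [Hfc Hc]].
  { intros c Hc. apply is_derive_Reals, Hd, Hc. }
  specialize (Hpos c Hc). nra.
Qed.

Lemma strict_decr_of_is_derive (f df : R -> R) a b : a < b ->
  (forall x, a <= x <= b -> is_derive f x (df x)) ->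
  (forall x, a < x < b -> df x < 0) -> f b < f a.
Proof.
  intros Hab Hd Hneg.
  enough (- f a < - f b) by lra.
  apply (strict_incr_of_is_derive (fun x => - f x) (fun x => - df x)); [exact Hab | |].
  - intros x Hx. apply (is_derive_opp f), Hd, Hx.
  - intros x Hx. specialize (Hneg x Hx). lra.
Qed.

Definition net_kill_integral (k : R -> R) (r z c : R) : R :=
  RInt (fun u => (k u - r) / u) z c.

Definition concave_or_sigmoidal (k : R -> R) : Prop :=
  (forall c, 0 < c -> Derive_n k 2 c < 0) \/
  (exists cinfl, 0 < cinfl /\
     (forall c, 0 < c < cinfl -> Derive_n k 2 c > 0) /\
     (forall c, cinfl < c -> Derive_n k 2 c < 0)).

(* [kill_gap k r c = 0] is the equation [k' c = (k c - r) / c] defining [c_opt]. *)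
Definition kill_gap (k : R -> R) (r c : R) : R := c * Derive k c - k c + r.

(* [AUC = c T + c / mu], with [T] eliminated through the log-reduction constraint
   [(k c - r) T + net_kill_integral c / mu = L]. *)
Definition auc_on_constraint (k : R -> R) (r zMIC mu L c : R) : R :=
  c / mu + c * (L - net_kill_integral k r zMIC c / mu) / (k c - r).

Section Kill_model.

Variable k : R -> R.
Variables r zMIC : R.
Hypothesis k_cont : forall c, 0 < c -> continuous k c.
Hypothesis k_incr : forall x y, 0 <= x -> x < y -> k x < k y.
Hypothesis k_d1 : forall c, 0 < c -> ex_derive k c.
Hypothesis k_d2 : forall c, 0 < c -> ex_derive (Derive k) c.
Hypothesis zMIC_pos : 0 < zMIC.
Hypothesis k_zMIC : k zMIC = r.

Lemma k_le x y : 0 <= x -> x <= y -> k x <= k y.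
Proof. intros Hx [Hxy | <-]; [apply Rlt_le, k_incr | right]; easy. Qed.

Lemma continuous_kill_ratio u : 0 < u -> continuous (fun u => (k u - r) / u) u.
Proof.
  intros Hu.
  apply (continuous_mult (fun u => k u - r) (fun u => / u)).
  - apply (continuous_minus k (fun _ => r)); [exact (k_cont u Hu) | apply continuous_const].
  - apply (continuous_Rinv_comp (fun u => u)); [apply continuous_id | lra].
Qed.

(* Substituting [u = c exp (- mu (s - a))] turns [ds] into [- du / (mu u)]. *)
Lemma RInt_kill_decay c mu a b : 0 < c -> 0 < mu ->
  RInt (fun s => k (c * exp (- mu * (s - a))) - r) a b =
  / mu * net_kill_integral k r (c * exp (- mu * (b - a))) c.
Proof.
  intros Hc Hmu.
  set (g := fun s => c * exp (- mu * (s - a))).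
  set (h := fun u => (k u - r) / u).
  assert (Hg : forall s, 0 < g s) by (intros s; apply Rmult_lt_0_compat; [lra | apply exp_pos]).
  assert (Hdg : forall s, is_derive g s (- mu * g s)).
  { intros s. unfold g. auto_derive; [easy |]. unfold Rminus. ring. }
  assert (Hcont_dg : forall s, continuous (fun s => - mu * g s) s).
  { intros s. apply (continuous_mult (fun _ => - mu) g); [apply continuous_const |].
    apply (ex_derive_continuous (V := R_NormedModule)). eexists. apply Hdg. }
  rewrite (RInt_ext _ (fun s => / (- mu) * ((- mu * g s) * h (g s)))).
  2:{ intros s _. unfold h.
      change (@eq R (k (g s) - r) (/ - mu * (- mu * g s * ((k (g s) - r) / g s)))).
      field. split; [apply Rgt_not_eq, Hg | lra]. }
  rewrite (RInt_scal (V := R_CompleteNormedModule)).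
  2:{ apply (ex_RInt_continuous (V := R_CompleteNormedModule)). intros s _.
      apply (continuous_mult (fun s => - mu * g s) (fun s => h (g s))); [apply Hcont_dg |].
      apply (continuous_comp g h); [| apply continuous_kill_ratio, Hg].
      apply (ex_derive_continuous (V := R_NormedModule)). eexists. apply Hdg. }
  rewrite (RInt_comp (V := R_CompleteNormedModule) h g (fun s => - mu * g s));
    [| intros s _; apply continuous_kill_ratio, Hg | intros s _; split; [apply Hdg | apply Hcont_dg]].
  replace (g a) with c by (unfold g; rewrite Rminus_diag, Rmult_0_r, exp_0; ring).
  rewrite <- (opp_RInt_swap (V := R_CompleteNormedModule)).
  - unfold net_kill_integral, scal, opp; simpl; unfold mult; simpl.
    change (@eq R (/ - mu * - RInt h (g b) c) (/ mu * RInt h (g b) c)). field. lra.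
  - apply (ex_RInt_continuous (V := R_CompleteNormedModule)). intros u Hu.
    apply continuous_kill_ratio. pose proof (Rmin_glb_lt _ _ _ (Hg b) Hc). lra.
Qed.

Lemma r_lt_k c : zMIC < c -> r < k c.
Proof. intros Hc. rewrite <- k_zMIC. apply k_incr; lra. Qed.

Lemma is_derive_net_kill_integral x : 0 < x ->
  is_derive (net_kill_integral k r zMIC) x ((k x - r) / x).
Proof.
  intros Hx. unfold net_kill_integral.
  apply (is_derive_RInt (V := R_NormedModule) (fun u => (k u - r) / u) _ zMIC);
    [| exact (continuous_kill_ratio x Hx)].
  assert (Hx2 : 0 < x / 2) by lra.
  exists (mkposreal _ Hx2). intros y Hy.
  apply (RInt_correct (V := R_CompleteNormedModule)),
    (ex_RInt_continuous (V := R_CompleteNormedModule)).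
  intros u Hu. apply continuous_kill_ratio.
  apply Rabs_lt_between' in Hy. simpl in Hy.
  pose proof (Rmin_glb_lt zMIC y 0 zMIC_pos ltac:(lra)). lra.
Qed.

Lemma net_kill_integral_zMIC : net_kill_integral k r zMIC zMIC = 0.
Proof. unfold net_kill_integral. now rewrite RInt_point. Qed.

Lemma net_kill_integral_incr a b : zMIC <= a -> a < b ->
  net_kill_integral k r zMIC a < net_kill_integral k r zMIC b.
Proof.
  intros Ha Hab. apply (strict_incr_of_is_derive _ (fun u => (k u - r) / u)); [exact Hab | |].
  - intros x Hx. apply is_derive_net_kill_integral. lra.
  - intros x Hx. pose proof (r_lt_k x ltac:(lra)). apply Rdiv_lt_0_compat; lra.
Qed.

Lemma net_kill_integral_level b y : zMIC <= b -> 0 <= y <= net_kill_integral k r zMIC b ->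
  exists c, zMIC <= c <= b /\ net_kill_integral k r zMIC c = y.
Proof.
  intros Hb Hy.
  (* Clamping the argument at [zMIC] makes the integral continuous on all of [R]. *)
  set (G := fun x => net_kill_integral k r zMIC (Rmax zMIC x)).
  assert (HG : forall x, zMIC <= x -> G x = net_kill_integral k r zMIC x)
    by (intros x Hx; unfold G; now rewrite Rmax_right).
  destruct (IVT_gen G zMIC b y) as [c [Hc HGc]].
  - intros x. apply continuity_pt_filterlim.
    apply (continuous_comp (Rmax zMIC) (net_kill_integral k r zMIC)); [apply continuous_Rmax_l |].
    apply (ex_derive_continuous (V := R_NormedModule)). eexists.
    apply is_derive_net_kill_integral. pose proof (Rmax_l zMIC x). lra.
  - rewrite !HG, net_kill_integral_zMIC, Rmin_left, Rmax_right by lra; lra.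
  - rewrite Rmin_left, Rmax_right in Hc by lra.
    exists c. split; [exact Hc |]. rewrite <- HG by lra. exact HGc.
Qed.

Section Profile.

Variables c mu T : R.
Hypothesis zMIC_le_c : zMIC <= c.
Hypothesis T_ge0 : 0 <= T.
Hypothesis mu_pos : 0 < mu.

Let Tcross := T + / mu * ln (c / zMIC).
Let kill t := k (Cbc c mu T t) - r.

Fact Tcross_ge_T : T <= Tcross.
Proof.
  assert (0 <= / mu * ln (c / zMIC)); [| unfold Tcross; lra].
  apply Rmult_le_pos; [apply Rlt_le, Rinv_0_lt_compat, mu_pos | apply ln_div_ge0; lra].
Qed.

Fact ex_RInt_kill a b : ex_RInt kill a b.
Proof.
  apply (ex_RInt_continuous (V := R_CompleteNormedModule)). intros t _.
  apply (continuous_minus (fun t => k (Cbc c mu T t)) (fun _ => r)); [| apply continuous_const].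
  apply (continuous_comp (Cbc c mu T) k); [apply continuous_Cbc | apply k_cont, Cbc_pos; lra].
Qed.

Lemma RInt_kill_Cbc_cross :
  RInt kill 0 Tcross = (k c - r) * T + / mu * net_kill_integral k r zMIC c.
Proof.
  pose proof Tcross_ge_T.
  rewrite <- (RInt_Chasles kill 0 T Tcross) by apply ex_RInt_kill.
  rewrite (RInt_ext kill (fun _ => k c - r) 0 T).
  2:{ intros x Hx. rewrite Rmin_left, Rmax_right in Hx by lra.
      unfold kill, Cbc. destruct (Rle_dec x T); [reflexivity | lra]. }
  rewrite (RInt_ext kill (fun s => k (c * exp (- mu * (s - T))) - r) T Tcross).
  2:{ intros x Hx. rewrite Rmin_left, Rmax_right in Hx by lra.
      unfold kill. rewrite Cbc_Rmax, Rmax_right by lra. reflexivity. }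
  rewrite RInt_kill_decay, RInt_const by lra.
  unfold Tcross. replace (T + / mu * ln (c / zMIC) - T) with (/ mu * ln (c / zMIC)) by ring.
  rewrite decay_to_level by lra.
  unfold plus, scal; simpl; unfold mult; simpl. ring.
Qed.

(* The profile decreases through [zMIC] at [Tcross], so [kill] is nonnegative before
   and nonpositive after. *)
Lemma RInt_kill_Cbc_le_cross t : 0 <= t -> RInt kill 0 t <= RInt kill 0 Tcross.
Proof.
  intros Ht. pose proof Tcross_ge_T.
  assert (Hcross : Cbc c mu T Tcross = zMIC) by (apply Cbc_at_cross; lra).
  destruct (Rle_dec t Tcross) as [Hle | Hgt].
  - rewrite <- (RInt_Chasles kill 0 t Tcross) by apply ex_RInt_kill.
    assert (0 <= RInt kill t Tcross); [| unfold plus; simpl; lra].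
    apply RInt_ge_0; [exact Hle | apply ex_RInt_kill |]. intros x Hx. unfold kill.
    assert (k (Cbc c mu T Tcross) <= k (Cbc c mu T x)); [| rewrite Hcross in *; lra].
    apply k_le; [lra | apply Cbc_antitone; lra].
  - rewrite <- (RInt_Chasles kill 0 Tcross t) by apply ex_RInt_kill.
    assert (RInt kill Tcross t <= 0); [| unfold plus; simpl; lra].
    replace 0 with (RInt (fun _ => 0) Tcross t)
      by (rewrite RInt_const; unfold scal; simpl; unfold mult; simpl; ring).
    apply RInt_le; [lra | apply ex_RInt_kill | apply ex_RInt_const |]. intros x Hx. unfold kill.
    assert (k (Cbc c mu T x) <= k (Cbc c mu T Tcross)); [| rewrite Hcross in *; lra].
    apply k_le; [apply Rlt_le, Cbc_pos; lra | apply Cbc_antitone; lra].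
Qed.

Lemma LR_Cbc_cross : LR k r (Cbc c mu T) Tcross =
  / ln 10 * ((k c - r) * T + / mu * net_kill_integral k r zMIC c).
Proof. unfold LR. fold kill. now rewrite RInt_kill_Cbc_cross. Qed.

Lemma is_LRmax_Cbc_iff L : is_LRmax k r (Cbc c mu T) L <->
  (k c - r) * T + / mu * net_kill_integral k r zMIC c = ln 10 * L.
Proof.
  pose proof Tcross_ge_T. pose proof ln10_pos as H10.
  rewrite (is_LRmax_iff k r _ L Tcross); [| lra |].
  - rewrite LR_Cbc_cross. split; intros E; [rewrite <- E | rewrite E]; field; lra.
  - intros t Ht. unfold LR. apply Rmult_le_compat_l; [apply Rlt_le, Rinv_0_lt_compat, H10 |].
    now apply RInt_kill_Cbc_le_cross.
Qed.

End Profile.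

Lemma Derive_ge0 x : 0 < x -> 0 <= Derive k x.
Proof.
  intros Hx. destruct (Rle_or_lt 0 (Derive k x)) as [H | H]; [exact H | exfalso].
  destruct (proj1 (is_derive_Reals k x _) (Derive_correct k x (k_d1 x Hx)) (- Derive k x / 2))
    as [d Hd]; [lra |].
  pose proof (cond_pos d) as Hd0.
  assert (Hslope : 0 < (k (x + d / 2) - k x) / (d / 2)).
  { apply Rdiv_lt_0_compat; [| lra]. assert (k x < k (x + d / 2)) by (apply k_incr; lra). lra. }
  assert (Habs : Rabs ((k (x + d / 2) - k x) / (d / 2) - Derive k x) < - Derive k x / 2).
  { apply Hd; [lra |]. rewrite Rabs_right; lra. }
  apply Rabs_def2 in Habs. lra.
Qed.

Lemma is_derive_Derive_k x : 0 < x -> is_derive (Derive k) x (Derive_n k 2 x).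
Proof. intros Hx. apply Derive_correct, k_d2, Hx. Qed.

(* [k'] is nonnegative and, by (A3), strictly monotone on one side of every point, hence positive. *)
Lemma Derive_pos : concave_or_sigmoidal k -> forall x, 0 < x -> 0 < Derive k x.
Proof.
  intros HA3 x Hx.
  assert (Hright : (forall c, x < c -> Derive_n k 2 c < 0) -> 0 < Derive k x).
  { intros Hneg. assert (Derive k (x + 1) < Derive k x).
    { apply (strict_decr_of_is_derive _ (Derive_n k 2)); [lra | |].
      - intros y Hy. apply is_derive_Derive_k. lra.
      - intros y Hy. apply Hneg. lra. }
    assert (0 <= Derive k (x + 1)) by (apply Derive_ge0; lra). lra. }
  destruct HA3 as [Hconc | [ci [Hci [Hlo Hhi]]]].
  - apply Hright. intros c Hc. apply Hconc. lra.
  - destruct (Rlt_or_le x ci) as [Hxci | Hcix].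
    + assert (Derive k (x / 2) < Derive k x).
      { apply (strict_incr_of_is_derive _ (Derive_n k 2)); [lra | |].
        - intros y Hy. apply is_derive_Derive_k. lra.
        - intros y Hy. apply Hlo. lra. }
      assert (0 <= Derive k (x / 2)) by (apply Derive_ge0; lra). lra.
    + apply Hright. intros c Hc. apply Hhi. lra.
Qed.

Lemma is_derive_kill_gap x : 0 < x -> is_derive (kill_gap k r) x (x * Derive_n k 2 x).
Proof.
  intros Hx. unfold kill_gap.
  auto_derive; [split; [apply k_d2 | split; [apply k_d1 |]]; easy |].
  change (fun y => Derive k y) with (Derive k). change (fun y => k y) with k.
  change (Derive_n k 2 x) with (Derive (Derive k) x). ring.
Qed.

Lemma kill_gap_incr x y : 0 < x -> x < y -> (forall c, x < c < y -> Derive_n k 2 c > 0) ->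
  kill_gap k r x < kill_gap k r y.
Proof.
  intros Hx Hxy Hpos.
  apply (strict_incr_of_is_derive _ (fun c => c * Derive_n k 2 c)); [exact Hxy | |].
  - intros c Hc. apply is_derive_kill_gap. lra.
  - intros c Hc. specialize (Hpos c Hc). nra.
Qed.

Lemma kill_gap_decr x y : 0 < x -> x < y -> (forall c, x < c < y -> Derive_n k 2 c < 0) ->
  kill_gap k r y < kill_gap k r x.
Proof.
  intros Hx Hxy Hneg.
  apply (strict_decr_of_is_derive _ (fun c => c * Derive_n k 2 c)); [exact Hxy | |].
  - intros c Hc. apply is_derive_kill_gap. lra.
  - intros c Hc. specialize (Hneg c Hc). nra.
Qed.

Lemma kill_gap_pos_below_zMIC y : 0 < y < zMIC -> 0 < kill_gap k r y.
Proof.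
  intros Hy. unfold kill_gap.
  assert (0 <= Derive k y) by (apply Derive_ge0; lra).
  assert (k y < k zMIC) by (apply k_incr; lra). nra.
Qed.

(* [kill_gap' c = c k'' c]: past the inflection point [kill_gap] decreases, and before it
   [kill_gap] increases from the positive values it takes below [zMIC]. *)
Lemma kill_gap_sign copt : concave_or_sigmoidal k -> 0 < copt -> kill_gap k r copt = 0 ->
  forall x, 0 < x ->
  (x < copt -> 0 < kill_gap k r x) /\ (copt < x -> kill_gap k r x < 0).
Proof.
  intros HA3 Hcopt Hgap.
  assert (Hshape : exists ci, 0 <= ci /\ (forall c, ci < c -> Derive_n k 2 c < 0) /\
                              (forall x, 0 < x <= ci -> 0 < kill_gap k r x)).
  { destruct HA3 as [Hconc | [ci [Hci [Hlo Hhi]]]].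
    - exists 0. split; [lra | split; [exact Hconc |]]. intros x Hx. lra.
    - exists ci. split; [lra | split; [exact Hhi |]]. intros x Hx.
      set (y := Rmin zMIC x / 2).
      assert (0 < Rmin zMIC x) by (apply Rmin_glb_lt; lra).
      pose proof (Rmin_l zMIC x). pose proof (Rmin_r zMIC x).
      assert (0 < kill_gap k r y) by (apply kill_gap_pos_below_zMIC; unfold y; lra).
      assert (kill_gap k r y < kill_gap k r x); [| lra].
      apply kill_gap_incr; unfold y; try lra. intros c Hc. apply Hlo. lra. }
  destruct Hshape as [ci [Hci [Hneg Hpos]]].
  assert (Hcicopt : ci < copt).
  { destruct (Rlt_or_le ci copt) as [H | H]; [exact H |].
    specialize (Hpos copt (conj Hcopt H)). lra. }
  intros x Hx. split; intros Hxc.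
  - destruct (Rle_or_lt x ci) as [Hxci | Hcix]; [apply Hpos; lra |].
    rewrite <- Hgap. apply kill_gap_decr; [lra | exact Hxc |]. intros c Hc. apply Hneg. lra.
  - rewrite <- Hgap. apply kill_gap_decr; [lra | exact Hxc |]. intros c Hc. apply Hneg. lra.
Qed.

Section Constrained_AUC.

Variables mu L : R.
Hypothesis mu_pos : 0 < mu.

Lemma is_derive_auc_on_constraint x : zMIC < x ->
  is_derive (auc_on_constraint k r zMIC mu L) x
    (- ((L - net_kill_integral k r zMIC x / mu) / (k x - r) ^ 2) * kill_gap k r x).
Proof.
  intros Hx. pose proof (r_lt_k x Hx).
  pose proof (is_derive_net_kill_integral x ltac:(lra)) as HF.
  unfold auc_on_constraint. auto_derive.
  - repeat split; try lra; [eexists; exact HF | apply k_d1; lra].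
  - change (Derive (fun y => k y) x) with (Derive k x).
    change (Derive (fun y => net_kill_integral k r zMIC y) x)
      with (Derive (net_kill_integral k r zMIC) x).
    rewrite (is_derive_unique _ _ _ HF). unfold kill_gap. field. lra.
Qed.

Lemma auc_slope_weight_pos y b : zMIC < y -> y < b ->
  net_kill_integral k r zMIC b <= mu * L ->
  0 < (L - net_kill_integral k r zMIC y / mu) / (k y - r) ^ 2.
Proof.
  intros Hy Hyb HFb. pose proof (r_lt_k y Hy).
  assert (net_kill_integral k r zMIC y < net_kill_integral k r zMIC b)
    by (apply net_kill_integral_incr; lra).
  apply Rdiv_lt_0_compat; [| apply pow_lt; lra].
  apply Rlt_0_minus, (Rmult_lt_reg_l mu); [exact mu_pos |]. field_simplify; lra.
Qed.

Lemma auc_on_constraint_decr a b : zMIC < a -> a < b ->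
  net_kill_integral k r zMIC b <= mu * L ->
  (forall y, a < y < b -> 0 < kill_gap k r y) ->
  auc_on_constraint k r zMIC mu L b < auc_on_constraint k r zMIC mu L a.
Proof.
  intros Ha Hab HFb Hgap.
  eapply strict_decr_of_is_derive;
    [exact Hab | intros x Hx; apply is_derive_auc_on_constraint; lra |].
  intros y Hy. specialize (Hgap y Hy).
  pose proof (auc_slope_weight_pos y b ltac:(lra) ltac:(lra) HFb). nra.
Qed.

Lemma auc_on_constraint_incr a b : zMIC < a -> a < b ->
  net_kill_integral k r zMIC b <= mu * L ->
  (forall y, a < y < b -> kill_gap k r y < 0) ->
  auc_on_constraint k r zMIC mu L a < auc_on_constraint k r zMIC mu L b.
Proof.
  intros Ha Hab HFb Hgap.
  eapply strict_incr_of_is_derive;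
    [exact Hab | intros x Hx; apply is_derive_auc_on_constraint; lra |].
  intros y Hy. specialize (Hgap y Hy).
  pose proof (auc_slope_weight_pos y b ltac:(lra) ltac:(lra) HFb). nra.
Qed.

End Constrained_AUC.

Section Optimal_dosing.

Variables mu LRt : R.
Hypothesis mu_pos : 0 < mu.
Hypothesis LRt_pos : 0 < LRt.

Let F := net_kill_integral k r zMIC.
Let A := auc_on_constraint k r zMIC mu (ln 10 * LRt).

Lemma feasible_iff c T : feasible k r zMIC mu LRt c T <->
  zMIC < c /\ 0 <= T /\ (k c - r) * T + / mu * F c = ln 10 * LRt.
Proof.
  pose proof ln10_pos. pose proof (Rmult_lt_0_compat _ _ ln10_pos LRt_pos).
  split.
  - intros [Hc [HT HLR]].
    apply (is_LRmax_Cbc_iff c mu T Hc HT mu_pos) in HLR.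
    split; [| easy]. destruct Hc as [Hlt | <-]; [exact Hlt |].
    rewrite net_kill_integral_zMIC, k_zMIC in HLR. lra.
  - intros [Hc [HT HLR]]. split; [lra | split; [exact HT |]].
    now apply (is_LRmax_Cbc_iff c mu T); try lra.
Qed.

Lemma AUC_feasible c T : feasible k r zMIC mu LRt c T -> AUC (Cbc c mu T) = A c.
Proof.
  intros [Hc [HT HLR]]%feasible_iff. pose proof (r_lt_k c Hc).
  rewrite AUC_Cbc by lra. unfold A, auc_on_constraint. fold F. rewrite <- HLR. field. lra.
Qed.

Lemma feasible_net_kill_le c T : feasible k r zMIC mu LRt c T -> F c <= mu * (ln 10 * LRt).
Proof.
  intros [Hc [HT HLR]]%feasible_iff. pose proof (r_lt_k c Hc).
  assert (0 <= (k c - r) * T) by (apply Rmult_le_pos; lra).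
  replace (F c) with (mu * (/ mu * F c)) by (field; lra).
  apply Rmult_le_compat_l; lra.
Qed.

Lemma LR_cross_feasible c T : feasible k r zMIC mu LRt c T ->
  LR k r (Cbc c mu T) (T + / mu * ln (c / zMIC)) = LRt.
Proof.
  intros [Hc [HT HLR]]%feasible_iff. pose proof ln10_pos.
  rewrite LR_Cbc_cross by lra. fold F. rewrite HLR. field. lra.
Qed.

(* On the constraint surface [T] is a function of [c], so the AUC only depends on [c]. *)
Lemma is_solution_of_strict_min c0 T0 : feasible k r zMIC mu LRt c0 T0 ->
  (forall c T, feasible k r zMIC mu LRt c T -> c <> c0 -> A c0 < A c) ->
  is_solution k r zMIC mu LRt c0 T0.
Proof.
  intros Hfeas0 Hmin. split; [exact Hfeas0 |]. intros c T Hfeas.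
  rewrite (AUC_feasible _ _ Hfeas0), (AUC_feasible _ _ Hfeas).
  destruct (Req_dec c c0) as [-> | Hne]; [| specialize (Hmin c T Hfeas Hne); split; lra].
  split; [lra | intros _; split; [reflexivity |]].
  apply feasible_iff in Hfeas as [Hc [_ E]]. apply feasible_iff in Hfeas0 as [_ [_ E0]].
  pose proof (r_lt_k c0 Hc).
  apply (Rmult_eq_reg_l (k c0 - r)); lra.
Qed.

Variable copt : R.
Hypothesis k_shape : concave_or_sigmoidal k.
Hypothesis copt_pos : 0 < copt.
Hypothesis copt_eq : Derive k copt = (k copt - r) / copt.

Lemma kill_gap_copt : kill_gap k r copt = 0.
Proof. unfold kill_gap. rewrite copt_eq. field. lra. Qed.

Lemma zMIC_lt_copt : zMIC < copt.
Proof.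
  assert (Hk : r < k copt).
  { pose proof (Derive_pos k_shape copt copt_pos).
    assert (k copt - r = copt * Derive k copt) by (rewrite copt_eq; field; lra). nra. }
  destruct (Rlt_or_le zMIC copt) as [H | H]; [exact H |].
  pose proof (k_le copt zMIC ltac:(lra) H). lra.
Qed.

Lemma kill_gap_pos_below_copt y : 0 < y < copt -> 0 < kill_gap k r y.
Proof. intros Hy. apply (kill_gap_sign copt k_shape copt_pos kill_gap_copt); lra. Qed.

Lemma kill_gap_neg_above_copt y : copt < y -> kill_gap k r y < 0.
Proof. intros Hy. apply (kill_gap_sign copt k_shape copt_pos kill_gap_copt); lra. Qed.

Lemma auc_min_at_copt : F copt < mu * (ln 10 * LRt) ->
  forall c T, feasible k r zMIC mu LRt c T -> c <> copt -> A copt < A c.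
Proof.
  intros Hrho c T Hfeas Hne. pose proof zMIC_lt_copt.
  pose proof (feasible_net_kill_le c T Hfeas).
  apply feasible_iff in Hfeas as [Hc _]. unfold A, F in *.
  destruct (Rlt_or_le c copt) as [Hlt | Hge].
  - apply auc_on_constraint_decr; try lra.
    intros y Hy. apply kill_gap_pos_below_copt. lra.
  - apply auc_on_constraint_incr; try lra.
    intros y Hy. apply kill_gap_neg_above_copt. lra.
Qed.

Lemma auc_min_at_level cstar : zMIC < cstar <= copt -> F cstar = mu * (ln 10 * LRt) ->
  forall c T, feasible k r zMIC mu LRt c T -> c <> cstar -> A cstar < A c.
Proof.
  intros Hcstar HF c T Hfeas Hne.
  pose proof (feasible_net_kill_le c T Hfeas).
  apply feasible_iff in Hfeas as [Hc _].
  assert (Hlt : c < cstar).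
  { destruct (Rlt_or_le c cstar) as [Hlt | Hge]; [exact Hlt |].
    pose proof (net_kill_integral_incr cstar c ltac:(lra) ltac:(lra)). unfold F in *. lra. }
  unfold A, F in *. apply auc_on_constraint_decr; try lra.
  intros y Hy. apply kill_gap_pos_below_copt. lra.
Qed.

Lemma solution_at_copt : F copt < ln 10 * LRt * mu ->
  let Topt := (ln 10 * LRt - / mu * F copt) / (k copt - r) in
  is_solution k r zMIC mu LRt copt Topt /\
  LR k r (Cbc copt mu Topt) (Topt + / mu * ln (copt / zMIC)) = LRt /\
  AUC (Cbc copt mu Topt) = (/ mu + (ln 10 * LRt - / mu * F copt) / (k copt - r)) * copt.
Proof.
  intros Hrho Topt. pose proof zMIC_lt_copt as Hcopt. pose proof (r_lt_k copt Hcopt).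
  assert (HT : 0 < Topt).
  { apply Rdiv_lt_0_compat; [| lra].
    apply Rlt_0_minus, (Rmult_lt_reg_l mu); [exact mu_pos |]. field_simplify; lra. }
  assert (Hfeas : feasible k r zMIC mu LRt copt Topt).
  { apply feasible_iff. split; [exact Hcopt | split; [lra |]]. unfold Topt. field. lra. }
  split; [| split].
  - apply (is_solution_of_strict_min _ _ Hfeas), auc_min_at_copt. lra.
  - apply LR_cross_feasible, Hfeas.
  - rewrite AUC_Cbc by lra. unfold Topt. field. lra.
Qed.

Lemma solution_at_level : ln 10 * LRt * mu <= F copt ->
  exists cstar, zMIC <= cstar /\ F cstar = ln 10 * LRt * mu /\
    is_solution k r zMIC mu LRt cstar 0 /\
    (forall t, 0 <= t -> Cbc cstar mu 0 t = cstar * exp (- mu * t)) /\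
    LR k r (Cbc cstar mu 0) (/ mu * ln (cstar / zMIC)) = LRt /\
    AUC (Cbc cstar mu 0) = / mu * cstar.
Proof.
  intros Hrho. pose proof zMIC_lt_copt. pose proof ln10_pos.
  assert (Hy : 0 < ln 10 * LRt * mu)
    by (apply Rmult_lt_0_compat; [apply Rmult_lt_0_compat |]; lra).
  destruct (net_kill_integral_level copt (ln 10 * LRt * mu)) as [cstar [Hcstar HF]];
    [lra | unfold F in Hrho; lra |].
  assert (Hlt : zMIC < cstar).
  { destruct (proj1 Hcstar) as [Hlt | <-]; [exact Hlt |].
    rewrite net_kill_integral_zMIC in HF. lra. }
  assert (Hfeas : feasible k r zMIC mu LRt cstar 0).
  { apply feasible_iff. split; [exact Hlt | split; [lra |]]. unfold F. rewrite HF. field. lra. }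
  exists cstar. split; [lra | split; [exact HF | split; [| split; [| split]]]].
  - apply (is_solution_of_strict_min _ _ Hfeas), auc_min_at_level; [lra |].
    unfold F. rewrite HF. ring.
  - intros t Ht. rewrite Cbc_Rmax, Rmax_right, Rminus_0_r by lra. reflexivity.
  - rewrite <- (Rplus_0_l (/ mu * ln (cstar / zMIC))). apply LR_cross_feasible, Hfeas.
  - rewrite AUC_Cbc by lra. field. lra.
Qed.

End Optimal_dosing.

End Kill_model.

Theorem theorem3 (k : R -> R) (r kmax mu LRt zMIC copt : R)
  (* (A1) *)
  (Hr : 0 < r)
  (Hk0 : k 0 = 0)
  (Hkpos : forall c, 0 <= c -> 0 <= k c)
  (Hkcont0 : filterlim k (at_right 0) (locally (k 0)))
  (Hkcont : forall c, 0 < c -> continuous k c)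
  (Hkincr : forall x y, 0 <= x -> x < y -> k x < k y)
  (Hkd1 : forall c, 0 < c -> ex_derive k c)
  (Hkd2 : forall c, 0 < c -> ex_derive (Derive k) c)
  (* (A2) *)
  (Hkmax : is_lim k p_infty kmax)
  (* (A3) *)
  (HA3 : (forall c, 0 < c -> Derive_n k 2 c < 0) \/
         (exists cinfl, 0 < cinfl /\
            (forall c, 0 < c < cinfl -> Derive_n k 2 c > 0) /\
            (forall c, cinfl < c -> Derive_n k 2 c < 0)))
  (* alpha > 1 *)
  (Halpha : kmax / r > 1)
  (Hmu : 0 < mu)
  (HLRt : 0 < LRt)
  (HzMIC : 0 < zMIC /\ k zMIC = r)
  (Hcopt : 0 < copt /\ Derive k copt = (k copt - r) / copt) :
  let rho := RInt (fun u => (k u - r) / u) zMIC copt in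
  (rho < ln 10 * LRt * mu ->
     let Topt := (ln 10 * LRt - / mu * rho) / (k copt - r) in
     is_solution k r zMIC mu LRt copt Topt /\
     LR k r (Cbc copt mu Topt) (Topt + / mu * ln (copt / zMIC)) = LRt /\
     AUC (Cbc copt mu Topt) =
       (/ mu + (ln 10 * LRt - / mu * rho) / (k copt - r)) * copt) /\
  (ln 10 * LRt * mu <= rho ->
     exists cstar, zMIC <= cstar /\
       RInt (fun u => (k u - r) / u) zMIC cstar = ln 10 * LRt * mu /\
       is_solution k r zMIC mu LRt cstar 0 /\
       (forall t, 0 <= t -> Cbc cstar mu 0 t = cstar * exp (- mu * t)) /\
       LR k r (Cbc cstar mu 0) (/ mu * ln (cstar / zMIC)) = LRt /\
       AUC (Cbc cstar mu 0) = / mu * cstar).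
Proof.
  (* (A2), [alpha > 1] and the behaviour of [k] at [0] only serve to make [zMIC] and [copt]
     exist; both are given here. *)
  intros rho. destruct HzMIC as [Hz Hkz], Hcopt as [Hcopt_pos Hcopt_eq]. split.
  - exact (solution_at_copt k r zMIC Hkcont Hkincr Hkd1 Hkd2 Hz Hkz mu LRt Hmu HLRt
             copt HA3 Hcopt_pos Hcopt_eq).
  - exact (solution_at_level k r zMIC Hkcont Hkincr Hkd1 Hkd2 Hz Hkz mu LRt Hmu HLRt
             copt HA3 Hcopt_pos Hcopt_eq).
Qed.
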